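(* Let $\varphi$ be an $\mathrm{LTL_{PSL}}$ formula, $D=(I^+,I^-)$ a partition of the set $I$ of its subformulae of the form $s\preceq s'$, and $\varphi_D$ the associated formula. If the language of the generalised Büchi automaton $\mathcal{A}_{\varphi_D}$ is non-empty, then $\varphi_D$ is $\mathrm{SLTL}$-satisfiable.
   Context: Propositional variables $\mathcal{P}$ and standpoint symbols $\mathcal{S}$ (with universal symbol $*$) are countably infinite. SLTL formulae: $\varphi ::= p \mid s \preceq s' \mid \neg\varphi \mid \varphi\wedge\varphi \mid \Diamond_s\varphi \mid \Box_s\varphi \mid X\varphi \mid \varphi\,U\,\varphi$. A model is $M=(\Pi,\lambda)$ with $\Pi\neq\emptyset$ a set of traces $\sigma:\mathbb{N}\to 2^{\mathcal{P}}$, $\lambda:\mathcal{S}\to 2^{\Pi}\setminus\{\emptyset\}$, $\lambda( * )=\Pi$; $M,\sigma,i\models p$ iff $p\in\sigma(i)$; $s\preceq s'$ holds iff $\lambda(s)\subseteq\lambda(s')$; $\Diamond_s\psi$ (resp. $\Box_s\psi$) holds at $\sigma,i$ iff $\psi$ holds at $\sigma',i$ for some (resp. all) $\sigma'\in\lambda(s)$; $X\psi$ holds at $\sigma,i$ iff $\psi$ holds at $\sigma,i+1$; $\psi U\chi$ holds at $\sigma,i$ iff $\chi$ holds at some $\sigma,i'$, $i'\ge i$, and $\psi$ at $\sigma,i''$ for all $i\le i''<i'$. $G\psi:=\neg(\top U\neg\psi)$. Satisfiable: holds at $\sigma,0$ for some $M$, $\sigma\in\Pi$. $\mathrm{LTL_{PSL}}$: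 SLTL formulae with no $X$ or $U$ in the scope of any $\Diamond_s$ or $\Box_s$. $\varphi_D:=\varphi[I^+\mapsto\top,I^-\mapsto\bot]\wedge G\big(\bigwedge_{(s\preceq s')\in I^+}(s\preceq s')\wedge\bigwedge_{(s\preceq s')\in I^-}(\Diamond_s p_{s,s'}\wedge\neg\Diamond_{s'}p_{s,s'})\big)$, where members of $I^+$ (resp. $I^-$) are replaced by $\top$ (resp. $\bot$) and the $p_{s,s'}$ are fresh variables. PSL is the temporal-free fragment; a PSL model is $(\Pi,V)$ with $\Pi$ finite nonempty, $V:\mathcal{S}\cup\mathcal{P}\to 2^{\Pi}$, $V(s)\neq\emptyset$ for all $s$, $V( * )=\Pi$; $\pi\models p$ iff $\pi\in V(p)$, $s\preceq s'$ iff $V(s)\subseteq V(s')$, $\Diamond_s\psi$/$\Box_s\psi$ iff $\psi$ holds at some/all $\pi'\in V(s)$. The closure $cl(\varphi_D)$ is the smallest set containing all subformulae of $\varphi_D$, $\top$ and $\bot$, closed under negation (identifying $\neg\neg\psi$ with $\psi$), and such that $\psi U\psi'\in cl(\varphi_D)$ implies $X(\psi U\psi')\in cl(\varphi_D)$. $B\subseteq cl(\varphi_D)$ is maximally consistent if $\top\in B$, $\bot\notin B$; $\psi\in B$ iff $\neg\psi\notin B$ for $\neg\psi\in cl(\varphi_D)$; $\psi_1\wedge\psi_2\in B$ iff $\psi_1,\psi_2\in B$; $\psi_1U\psi_2\in B$ iff $\psi_2\in B$ or $\{\psi_1,X(\psi_1U\psi_2)\}\subseteq B$. $B$ is standpoint-consistent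 if the conjunction of the members of $B$ that are PSL formulae is PSL-satisfiable; $B$ is s-elementary if maximally consistent and standpoint-consistent. $\mathcal{A}_{\varphi_D}=(Q,2^{\mathcal{P}(\varphi_D)},\delta,Q_0,\mathcal{F})$ where $\mathcal{P}(\varphi_D)$ is the set of variables of $\varphi_D$; $Q$ is the set of s-elementary sets; $Q_0=\{B\in Q:\varphi_D\in B\}$; $\mathcal{F}$ contains, for each $\psi_1U\psi_2\in cl(\varphi_D)$, the set $\{B\in Q:\psi_1U\psi_2\notin B\text{ or }\psi_2\in B\}$; $\delta(B,A)=\emptyset$ if $A\neq B\cap\mathcal{P}(\varphi_D)$, and otherwise $\delta(B,A)$ is the set of $B'\in Q$ such that for every $X\psi\in cl(\varphi_D)$, $X\psi\in B$ iff $\psi\in B'$. An infinite word is accepted if it has a run starting in $Q_0$ that visits each set of $\mathcal{F}$ infinitely often. *)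

From Stdlib Require Import List Arith Bool.
Import ListNotations.

(* Propositional variables and standpoint symbols are both nat (countably
   infinite); the standpoint 0 is the universal standpoint *. *)
Definition star : nat := 0.

Inductive form : Type :=
| Top : form
| Var : nat -> form
| Prec : nat -> nat -> form
| Neg : form -> form
| And : form -> form -> form
| Dia : nat -> form -> form
| Box : nat -> form -> form
| Next : form -> form
| Until : form -> form -> form.

Definition Bot : form := Neg Top.
Definition G (f : form) : form := Neg (Until Top (Neg f)).

Definition neg' (f : form) : form :=
  match f with Neg g => g | _ => Neg f end.

Fixpoint subf (psi phi : form) : Prop :=
  psi = phi \/
  match phi with
  | Top | Var _ | Prec _ _ => False
  | Neg g | Dia _ g | Box _ g | Next g => subf psi g
  | And g h | Until g h => subf psi g \/ subf psi h
  end.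

Definition vars (phi : form) (p : nat) : Prop := subf (Var p) phi.

Fixpoint temporal_free (f : form) : Prop :=
  match f with
  | Top | Var _ | Prec _ _ => True
  | Neg g | Dia _ g | Box _ g => temporal_free g
  | And g h => temporal_free g /\ temporal_free h
  | Next _ | Until _ _ => False
  end.

Fixpoint LTL_PSL (f : form) : Prop :=
  match f with
  | Top | Var _ | Prec _ _ => True
  | Neg g | Next g => LTL_PSL g
  | And g h | Until g h => LTL_PSL g /\ LTL_PSL h
  | Dia _ g | Box _ g => temporal_free g
  end.

Definition trace := nat -> nat -> Prop.  (* sigma i p  <->  p in sigma(i) *)

Record SLTL_model := {
  Pi : trace -> Prop;
  lam : nat -> trace -> Prop;
  Pi_nonempty : exists sg, Pi sg;
  lam_sub : forall s sg, lam s sg -> Pi sg;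
  lam_nonempty : forall s, exists sg, lam s sg;
  lam_star : forall sg, lam star sg <-> Pi sg
}.

Fixpoint sat (M : SLTL_model) (sg : trace) (i : nat) (f : form) : Prop :=
  match f with
  | Top => True
  | Var p => sg i p
  | Prec s s' => forall t, lam M s t -> lam M s' t
  | Neg g => ~ sat M sg i g
  | And g h => sat M sg i g /\ sat M sg i h
  | Dia s g => exists t, lam M s t /\ sat M t i g
  | Box s g => forall t, lam M s t -> sat M t i g
  | Next g => sat M sg (S i) g
  | Until g h => exists i', i <= i' /\ sat M sg i' h /\
                  forall i'', i <= i'' < i' -> sat M sg i'' g
  end.

Definition SLTL_satisfiable (f : form) : Prop :=
  exists (M : SLTL_model) (sg : trace), Pi M sg /\ sat M sg 0 f.

Fixpoint psl_sat {W : Type} (VS : nat -> W -> Prop) (VP : nat -> W -> Prop)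
  (w : W) (f : form) : Prop :=
  match f with
  | Top => True
  | Var p => VP p w
  | Prec s s' => forall u, VS s u -> VS s' u
  | Neg g => ~ psl_sat VS VP w g
  | And g h => psl_sat VS VP w g /\ psl_sat VS VP w h
  | Dia s g => exists u, VS s u /\ psl_sat VS VP u g
  | Box s g => forall u, VS s u -> psl_sat VS VP u g
  | Next _ | Until _ _ => False   (* not PSL formulae *)
  end.

(* the conjunction of the (finitely many) PSL formulae in B is PSL-satisfiable:
   there is a PSL model (finite nonempty Pi, valuation V) and a point at which
   every PSL member of B holds *)
Definition PSL_set_satisfiable (B : form -> Prop) : Prop :=
  exists (W : Type) (enum : list W) (VS VP : nat -> W -> Prop) (w0 : W),
    (forall x : W, In x enum) /\
    (forall s, exists u, VS s u) /\
    (forall u, VS star u) /\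
    (forall f, B f -> temporal_free f -> psl_sat VS VP w0 f).

Inductive cl (phi : form) : form -> Prop :=
| cl_sub : forall psi, subf psi phi -> cl phi psi
| cl_top : cl phi Top
| cl_bot : cl phi Bot
| cl_neg : forall psi, cl phi psi -> cl phi (neg' psi)
| cl_X : forall f g, cl phi (Until f g) -> cl phi (Next (Until f g)).

Definition max_consistent (phi : form) (B : form -> Prop) : Prop :=
  (forall f, B f -> cl phi f) /\
  B Top /\ ~ B Bot /\
  (forall f, cl phi f -> (B f <-> ~ B (neg' f))) /\
  (forall f g, cl phi (And f g) -> (B (And f g) <-> B f /\ B g)) /\
  (forall f g, cl phi (Until f g) ->
     (B (Until f g) <-> B g \/ (B f /\ B (Next (Until f g))))).

Definition s_elementary (phi : form) (B : form -> Prop) : Prop :=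
  max_consistent phi B /\ PSL_set_satisfiable B.

(* B' in delta(B, A) *)
Definition delta (phi : form) (B : form -> Prop) (A : nat -> Prop)
  (B' : form -> Prop) : Prop :=
  (forall p, A p <-> (vars phi p /\ B (Var p))) /\
  s_elementary phi B' /\
  (forall f, cl phi (Next f) -> (B (Next f) <-> B' f)).

(* words over 2^{P(phi)} *)
Definition word := nat -> nat -> Prop.

Definition accepted (phi : form) (w : word) : Prop :=
  exists rho : nat -> (form -> Prop),
    (s_elementary phi (rho 0) /\ rho 0 phi) /\
    (forall i, delta phi (rho i) (w i) (rho (S i))) /\
    (forall f g, cl phi (Until f g) ->
       forall n, exists m, n <= m /\ (~ rho m (Until f g) \/ rho m g)).

Definition language_nonempty (phi : form) : Prop :=
  exists w : word, (forall i p, w i p -> vars phi p) /\ accepted phi w.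

Definition inb (l : list (nat * nat)) (s s' : nat) : bool :=
  existsb (fun q => Nat.eqb (fst q) s && Nat.eqb (snd q) s') l.

Fixpoint substD (Ip : list (nat * nat)) (f : form) : form :=
  match f with
  | Top => Top
  | Var p => Var p
  | Prec s s' => if inb Ip s s' then Top else Bot
  | Neg g => Neg (substD Ip g)
  | And g h => And (substD Ip g) (substD Ip h)
  | Dia s g => Dia s (substD Ip g)
  | Box s g => Box s (substD Ip g)
  | Next g => Next (substD Ip g)
  | Until g h => Until (substD Ip g) (substD Ip h)
  end.

Fixpoint bigAnd (l : list form) : form :=
  match l with
  | [] => Top
  | [f] => f
  | f :: l' => And f (bigAnd l')
  end.

Definition phiD (phi : form) (Ip Im : list (nat * nat)) (pv : nat -> nat -> nat)
  : form :=
  And (substD Ip phi)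
      (G (bigAnd (map (fun q => Prec (fst q) (snd q)) Ip ++
                  map (fun q => And (Dia (fst q) (Var (pv (fst q) (snd q))))
                                    (Neg (Dia (snd q) (Var (pv (fst q) (snd q))))))
                      Im))).

(** A run of the automaton picks, at every instant i, an s-elementary set
    [rho i]; standpoint-consistency provides a pointed PSL model of its PSL
    members.  Stacking these models gives an SLTL model whose traces are the
    sequences choosing one world of the i-th model at each instant, and whose
    standpoint s collects the traces that stay inside s at every instant.  The
    conjunct G(...) of phi_D holds in every [rho i], so the sharpenings of
    [I+] hold in every PSL model and hence in the stacked model, while
    phi_D itself contains no other sharpening.  A truth lemma by induction on
    subformulae, with the acceptance condition settling the eventualities,
    shows that the trace of the designated points satisfies phi_D. *)

From Stdlib Require Import List Arith Lia Classical ClassicalEpsilon.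

Lemma subf_refl f : subf f f.
Proof. destruct f; simpl; auto. Qed.

Lemma subf_trans f g h : subf f g -> subf g h -> subf f h.
Proof.
  revert f g; induction h; intros f g Hfg Hgh; simpl in Hgh;
    destruct Hgh as [<-|Hgh]; try exact Hfg; try contradiction; simpl; right;
    try (destruct Hgh as [Hgh|Hgh]; [left|right]); eauto.
Qed.

Ltac subf_child H := eapply subf_trans; [|exact H]; simpl; auto using subf_refl.

Fixpoint LTL_PSL_in (Ip : list (nat * nat)) (f : form) : Prop :=
  match f with
  | Top | Var _ => True
  | Prec s s' => In (s, s') Ip
  | Neg g | Next g => LTL_PSL_in Ip g
  | And g h | Until g h => LTL_PSL_in Ip g /\ LTL_PSL_in Ip h
  | Dia _ g | Box _ g => temporal_free g /\ LTL_PSL_in Ip g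
  end.

Lemma LTL_PSL_in_subf Ip f g : LTL_PSL_in Ip f -> subf g f -> LTL_PSL_in Ip g.
Proof.
  revert g; induction f; intros g Hf Hg; simpl in Hg; destruct Hg as [->|Hg];
    auto; try contradiction; simpl in Hf;
    try (destruct Hg; [apply IHf1|apply IHf2]; tauto).
  all: apply IHf; tauto.
Qed.

Lemma temporal_free_LTL_PSL f : temporal_free f -> LTL_PSL f.
Proof. induction f; simpl; tauto. Qed.

Lemma temporal_free_substD Ip f : temporal_free f -> temporal_free (substD Ip f).
Proof. induction f; simpl; try tauto. destruct (inb Ip n n0); simpl; auto. Qed.

Lemma LTL_PSL_in_substD Ip f : LTL_PSL f -> LTL_PSL_in Ip (substD Ip f).
Proof.
  induction f; simpl; try tauto.
  - destruct (inb Ip n n0); simpl; auto.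
  - split; [apply temporal_free_substD | apply IHf, temporal_free_LTL_PSL]; auto.
  - split; [apply temporal_free_substD | apply IHf, temporal_free_LTL_PSL]; auto.
Qed.

Lemma LTL_PSL_in_bigAnd Ip l :
  (forall f, In f l -> LTL_PSL_in Ip f) -> LTL_PSL_in Ip (bigAnd l).
Proof.
  induction l as [|f l IH]; intros Hl; [exact I|].
  destruct l as [|g l]; [apply Hl; simpl; auto|].
  split; [apply Hl | apply IH; intros; apply Hl]; simpl; auto.
Qed.

Lemma LTL_PSL_in_phiD phi Ip Im pv :
  LTL_PSL phi -> LTL_PSL_in Ip (phiD phi Ip Im pv).
Proof.
  intros Hphi; simpl; split; [apply LTL_PSL_in_substD; exact Hphi|].
  split; auto; apply LTL_PSL_in_bigAnd; intros f Hf.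
  apply in_app_or in Hf.
  destruct Hf as [Hf|Hf]; apply in_map_iff in Hf;
    destruct Hf as [[s s'] [<- Hs]]; simpl; auto.
Qed.

Lemma temporal_free_neg' f : temporal_free f -> temporal_free (neg' f).
Proof. destruct f; simpl; auto. Qed.

Lemma psl_sat_neg' {W : Type} (VS VP : nat -> W -> Prop) u f :
  psl_sat VS VP u (neg' f) <-> ~ psl_sat VS VP u f.
Proof. destruct f; simpl; tauto. Qed.

Lemma max_consistent_Neg Phi B f :
  max_consistent Phi B -> cl Phi (Neg f) -> (B (Neg f) <-> ~ B f).
Proof. intros (_ & _ & _ & Hneg & _) Hf; exact (Hneg _ Hf). Qed.

Lemma max_consistent_neg' Phi B f :
  max_consistent Phi B -> cl Phi f -> (B (neg' f) <-> ~ B f).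
Proof. intros (_ & _ & _ & Hneg & _) Hf; rewrite (Hneg _ Hf); tauto. Qed.

Lemma max_consistent_And Phi B f g :
  max_consistent Phi B -> cl Phi (And f g) -> (B (And f g) <-> B f /\ B g).
Proof. intros (_ & _ & _ & _ & Hand & _); apply Hand. Qed.

Lemma max_consistent_bigAnd Phi B l :
  max_consistent Phi B -> subf (bigAnd l) Phi -> B (bigAnd l) ->
  forall f, In f l -> B f.
Proof.
  intros HB; induction l as [|g l IH]; intros Hs Hl f Hf; [destruct Hf|].
  destruct l as [|h l]; [destruct Hf as [<-|[]]; exact Hl|].
  change (bigAnd (g :: h :: l)) with (And g (bigAnd (h :: l))) in Hs, Hl.
  apply (max_consistent_And _ _ _ _ HB (cl_sub _ _ Hs)) in Hl.
  destruct Hf as [<-|Hf]; [tauto|].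
  apply IH; [subf_child Hs | tauto | exact Hf].
Qed.

(* Fairness forbids postponing [b] forever, so [u] is the least solution of
   the unfolding equation. *)
Lemma until_fixpoint_iff (a b u : nat -> Prop) :
  (forall k, u k <-> b k \/ (a k /\ u (S k))) ->
  (forall n, exists m, n <= m /\ (~ u m \/ b m)) ->
  forall i, u i <-> exists i', i <= i' /\ b i' /\ forall j, i <= j < i' -> a j.
Proof.
  intros Hu Hfair i; split.
  - intros Hi; destruct (Hfair i) as [m [Him Hm]].
    assert (Hreach : forall d k, k + d = m -> u k ->
              exists i', k <= i' /\ b i' /\ forall j, k <= j < i' -> a j).
    { induction d as [|d IH]; intros k Hk Huk.
      - exists k; split; [lia|]; split; [|intros; lia].
        replace k with m in * by lia; tauto.
      - apply Hu in Huk; destruct Huk as [Hb|[Ha Hu']].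
        + exists k; split; [lia|]; split; [exact Hb | intros; lia].
        + destruct (IH (S k) ltac:(lia) Hu') as [i' (Hki' & Hb & Hab)].
          exists i'; split; [lia|]; split; [exact Hb|].
          intros j Hj; destruct (Nat.eq_dec j k) as [->|]; [exact Ha | apply Hab; lia]. }
    exact (Hreach (m - i) i ltac:(lia) Hi).
  - intros [i' (Hii' & Hb & Hab)].
    assert (Hback : forall d j, j + d = i' -> i <= j -> u j).
    { induction d as [|d IH]; intros j Hj Hij; apply Hu.
      - left; replace j with i' by lia; exact Hb.
      - right; split; [apply Hab; lia | apply IH; lia]. }
    exact (Hback (i' - i) i ltac:(lia) (le_n i)).
Qed.

(* Unlike in [PSL_set_satisfiable], no finiteness is needed; [witness] picks a
   world in every standpoint. *)
Record pointed_model := {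
  world : Type;
  valS : nat -> world -> Prop;
  valP : nat -> world -> Prop;
  point : world;
  witness : nat -> world;
  valS_witness : forall s, valS s (witness s);
  valS_star : forall u, valS star u }.

Definition pointed_model_sat (M : pointed_model) (B : form -> Prop) : Prop :=
  forall f, B f -> temporal_free f -> psl_sat (valS M) (valP M) (point M) f.

Lemma PSL_set_satisfiable_pointed_model B :
  PSL_set_satisfiable B -> exists M, pointed_model_sat M B.
Proof.
  intros (W & _ & VS & VP & w0 & _ & Hne & Hstar & Hsat).
  destruct (choice VS Hne) as [wit Hwit].
  exists {| world := W; valS := VS; valP := VP; point := w0;
            witness := wit; valS_witness := Hwit; valS_star := Hstar |}.
  exact Hsat.
Qed.

Section Stack.

Variable M : nat -> pointed_model.

Definition labelled (t : trace) (i : nat) (u : world (M i)) : Prop :=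
  forall p, t i p <-> valP (M i) p u.

Definition stack_Pi (t : trace) : Prop := forall i, exists u, labelled t i u.

Definition stack_lam (s : nat) (t : trace) : Prop :=
  forall i, exists u, valS (M i) s u /\ labelled t i u.

Definition point_trace : trace := fun i p => valP (M i) p (point (M i)).

Definition witness_trace (s : nat) : trace :=
  fun i p => valP (M i) p (witness (M i) s).

Definition splice (i : nat) (v : world (M i)) (s : nat) : trace :=
  fun j p => if Nat.eq_dec j i then valP (M i) p v else witness_trace s j p.

Lemma point_trace_labelled i : labelled point_trace i (point (M i)).
Proof. intros p; reflexivity. Qed.

Lemma point_trace_Pi : stack_Pi point_trace.
Proof. intros i; exists (point (M i)); apply point_trace_labelled. Qed.

Lemma stack_lam_Pi s t : stack_lam s t -> stack_Pi t.
Proof. intros Ht i; destruct (Ht i) as [u [_ Hu]]; exists u; exact Hu. Qed.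

Lemma witness_trace_lam s : stack_lam s (witness_trace s).
Proof.
  intros i; exists (witness (M i) s); split; [apply valS_witness | unfold labelled; tauto].
Qed.

Lemma stack_lam_star t : stack_lam star t <-> stack_Pi t.
Proof.
  split; [apply stack_lam_Pi|].
  intros Ht i; destruct (Ht i) as [u Hu]; exists u; split; [apply valS_star | exact Hu].
Qed.

Lemma splice_labelled i v s : labelled (splice i v s) i v.
Proof. intros p; unfold splice; destruct (Nat.eq_dec i i); tauto. Qed.

Lemma splice_lam i v s : valS (M i) s v -> stack_lam s (splice i v s).
Proof.
  intros Hv j; unfold labelled, splice; destruct (Nat.eq_dec j i) as [->|Hji].
  - exists v; split; [exact Hv | intros p; destruct (Nat.eq_dec i i); tauto].
  - exists (witness (M j) s); split; [apply valS_witness | unfold witness_trace; tauto].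
Qed.

Definition stack_model : SLTL_model := {|
  Pi := stack_Pi;
  lam := stack_lam;
  Pi_nonempty := ex_intro _ point_trace point_trace_Pi;
  lam_sub := stack_lam_Pi;
  lam_nonempty := fun s => ex_intro _ (witness_trace s) (witness_trace_lam s);
  lam_star := stack_lam_star |}.

Variable Ip : list (nat * nat).

Hypothesis valS_Ip :
  forall s s', In (s, s') Ip -> forall i u, valS (M i) s u -> valS (M i) s' u.

Lemma sat_stack_model_psl_sat f :
  temporal_free f -> LTL_PSL_in Ip f -> forall i t u, labelled t i u ->
  (sat stack_model t i f <-> psl_sat (valS (M i)) (valP (M i)) u f).
Proof.
  induction f; simpl; intros Htf Hf i t u Htu; try tauto.
  - apply Htu.
  - split; intros _; [intros v; apply valS_Ip; exact Hf|].
    intros t' Ht' j; destruct (Ht' j) as [v [Hv Hlab]].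
    exists v; split; [apply (valS_Ip _ _ Hf); exact Hv | exact Hlab].
  - rewrite (IHf Htf Hf i t u Htu); tauto.
  - rewrite (IHf1 (proj1 Htf) (proj1 Hf) i t u Htu), (IHf2 (proj2 Htf) (proj2 Hf) i t u Htu).
    tauto.
  - split.
    + intros [t' [Ht' Hsat]]; destruct (Ht' i) as [v [Hv Hlab]].
      exists v; split; [exact Hv|]; apply (IHf Htf (proj2 Hf) i t' v Hlab); exact Hsat.
    + intros [v [Hv Hsat]]; exists (splice i v n); split; [apply splice_lam; exact Hv|].
      apply (IHf Htf (proj2 Hf) i _ v (splice_labelled i v n)); exact Hsat.
  - split.
    + intros Hsat v Hv.
      apply (IHf Htf (proj2 Hf) i _ v (splice_labelled i v n)).
      apply Hsat, splice_lam; exact Hv.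
    + intros Hsat t' Ht'; destruct (Ht' i) as [v [Hv Hlab]].
      apply (IHf Htf (proj2 Hf) i t' v Hlab), Hsat; exact Hv.
Qed.

End Stack.

Section Run.

Variable Phi : form.
Variable rho : nat -> form -> Prop.

Hypothesis rho_max_consistent : forall i, max_consistent Phi (rho i).
Hypothesis rho_Next :
  forall i f, cl Phi (Next f) -> (rho i (Next f) <-> rho (S i) f).
Hypothesis rho_fair : forall f g, cl Phi (Until f g) ->
  forall n, exists m, n <= m /\ (~ rho m (Until f g) \/ rho m g).

Lemma run_Until_iff f g i : cl Phi (Until f g) ->
  rho i (Until f g) <-> exists i', i <= i' /\ rho i' g /\ forall j, i <= j < i' -> rho j f.
Proof.
  intros HU.
  apply (until_fixpoint_iff (fun k => rho k f) (fun k => rho k g) (fun k => rho k (Until f g)));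
    [|exact (rho_fair _ _ HU)].
  intros k; destruct (rho_max_consistent k) as (_ & _ & _ & _ & _ & Huntil).
  rewrite (Huntil _ _ HU), (rho_Next k _ (cl_X _ _ _ HU)); tauto.
Qed.

Lemma run_G_always psi i : subf (G psi) Phi -> rho i (G psi) ->
  forall j, i <= j -> rho j psi.
Proof.
  intros Hs HG j Hij.
  assert (HsU : subf (Until Top (Neg psi)) Phi) by subf_child Hs.
  assert (HsN : subf (Neg psi) Phi) by subf_child HsU.
  apply (max_consistent_Neg _ _ _ (rho_max_consistent i) (cl_sub _ _ Hs)) in HG.
  apply NNPP; intros Hj; apply HG, run_Until_iff; [apply cl_sub; exact HsU|].
  exists j; split; [exact Hij|]; split.
  - apply (max_consistent_Neg _ _ _ (rho_max_consistent j) (cl_sub _ _ HsN)); exact Hj.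
  - intros k _; destruct (rho_max_consistent k) as (_ & HTop & _); exact HTop.
Qed.

Variable M : nat -> pointed_model.
Variable Ip : list (nat * nat).

Hypothesis valS_Ip :
  forall s s', In (s, s') Ip -> forall i u, valS (M i) s u -> valS (M i) s' u.
Hypothesis rho_models : forall i, pointed_model_sat (M i) (rho i).
Hypothesis Phi_LTL_PSL_in : LTL_PSL_in Ip Phi.

Lemma run_truth_temporal_free f i : subf f Phi -> temporal_free f ->
  rho i f <-> sat (stack_model M) (point_trace M) i f.
Proof.
  intros Hs Htf.
  rewrite (sat_stack_model_psl_sat M Ip valS_Ip f Htf (LTL_PSL_in_subf _ _ _ Phi_LTL_PSL_in Hs)
             i _ _ (point_trace_labelled M i)).
  split; [intros Hf; exact (rho_models i f Hf Htf)|].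
  intros Hf; apply NNPP; intros Hnf.
  apply (max_consistent_neg' _ _ _ (rho_max_consistent i) (cl_sub _ _ Hs)) in Hnf.
  exact (proj1 (psl_sat_neg' _ _ _ f) (rho_models i _ Hnf (temporal_free_neg' f Htf)) Hf).
Qed.

Lemma run_truth f : subf f Phi -> forall i,
  rho i f <-> sat (stack_model M) (point_trace M) i f.
Proof.
  induction f; intros Hs i;
    try solve [apply run_truth_temporal_free; [exact Hs | simpl; auto]]; simpl.
  - assert (Hs' : subf f Phi) by subf_child Hs.
    rewrite (max_consistent_Neg _ _ _ (rho_max_consistent i) (cl_sub _ _ Hs)), IHf by exact Hs'.
    reflexivity.
  - assert (Hs1 : subf f1 Phi) by subf_child Hs.
    assert (Hs2 : subf f2 Phi) by subf_child Hs.
    rewrite (max_consistent_And _ _ _ _ (rho_max_consistent i) (cl_sub _ _ Hs)), IHf1, IHf2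
      by assumption.
    reflexivity.
  - apply run_truth_temporal_free; [exact Hs|].
    apply (LTL_PSL_in_subf _ _ _ Phi_LTL_PSL_in Hs).
  - apply run_truth_temporal_free; [exact Hs|].
    apply (LTL_PSL_in_subf _ _ _ Phi_LTL_PSL_in Hs).
  - rewrite (rho_Next i f (cl_sub _ _ Hs)); apply IHf; subf_child Hs.
  - assert (Hs1 : subf f1 Phi) by subf_child Hs.
    assert (Hs2 : subf f2 Phi) by subf_child Hs.
    rewrite (run_Until_iff _ _ i (cl_sub _ _ Hs)).
    setoid_rewrite (IHf1 Hs1); setoid_rewrite (IHf2 Hs2); reflexivity.
Qed.

End Run.

Theorem lemma5 (phi : form) (Ip Im : list (nat * nat)) (pv : nat -> nat -> nat) :
  LTL_PSL phi ->
  (* D = (I+, I-) is a partition of I = {s <= s' subformulae of phi} *)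
  (forall s s', subf (Prec s s') phi <-> (In (s, s') Ip \/ In (s, s') Im)) ->
  (forall s s', In (s, s') Ip -> ~ In (s, s') Im) ->
  (* the p_{s,s'} are fresh and pairwise distinct *)
  (forall s s', In (s, s') Im -> ~ vars phi (pv s s')) ->
  (forall s1 s1' s2 s2', In (s1, s1') Im -> In (s2, s2') Im ->
     pv s1 s1' = pv s2 s2' -> s1 = s2 /\ s1' = s2') ->
  language_nonempty (phiD phi Ip Im pv) ->
  SLTL_satisfiable (phiD phi Ip Im pv).
Proof.
  intros Hphi _ _ _ _ [w [_ [rho [[Hse0 Hrho0] [Hdelta Hfair]]]]].
  assert (HPhi := LTL_PSL_in_phiD phi Ip Im pv Hphi).
  unfold phiD in *.
  set (L := _ ++ _) in *.
  set (Phi := And _ (G (bigAnd L))) in *.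
  assert (Hse : forall i, s_elementary Phi (rho i))
    by (intros [|i]; [exact Hse0 | apply (Hdelta i)]).
  assert (Hmc : forall i, max_consistent Phi (rho i)) by (intros i; apply Hse).
  assert (Hnext : forall i f, cl Phi (Next f) -> (rho i (Next f) <-> rho (S i) f))
    by (intros i; apply (Hdelta i)).
  destruct (choice (fun i M => pointed_model_sat M (rho i))) as [M HM].
  { intros i; apply PSL_set_satisfiable_pointed_model, Hse. }
  assert (HsG : subf (G (bigAnd L)) Phi) by (simpl; auto using subf_refl).
  assert (HL : forall i, rho i (bigAnd L)).
  { intros i; apply (run_G_always Phi rho Hmc Hnext Hfair _ 0); [exact HsG | | lia].
    apply (max_consistent_And _ _ _ _ (Hmc 0) (cl_sub _ _ (subf_refl Phi))); exact Hrho0. }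
  assert (HIp : forall s s', In (s, s') Ip -> forall i u, valS (M i) s u -> valS (M i) s' u).
  { intros s s' Hin i; apply (HM i (Prec s s')); [|exact I].
    assert (HsL : subf (bigAnd L) Phi) by subf_child HsG.
    apply (max_consistent_bigAnd _ _ L (Hmc i) HsL (HL i)).
    apply in_or_app; left; apply in_map_iff; exists (s, s'); auto. }
  exists (stack_model M), (point_trace M); split; [apply point_trace_Pi|].
  apply (run_truth Phi rho Hmc Hnext Hfair M Ip HIp HM HPhi Phi (subf_refl Phi) 0).
  exact Hrho0.
Qed.
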